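(* Let $\mathcal{G}_1,\ldots,\mathcal{G}_p$ be non-negatively weighted digraphs on the node set $\{1,\ldots,N\}$ whose union contains a directed spanning tree, and let $n\ge1$. For each $i$, let $\delta_i(x)=x-\sum_{j=1}^{\chi_i}\big(\gamma_{i,j}\beta_{i,j}^{\mathrm{T}}\otimes I_n\big)x$ for $x\in\mathbb{R}^{nN}$, with $\chi_i,\gamma_{i,j},\beta_{i,j}$ constructed from $\mathcal{G}_i$ as described in the context. Then $$\bigcap_{i=1}^p\{x\in\mathbb{R}^{nN}:\delta_i(x)=\mathbf{0}\}=\{\mathbf{1}_N\otimes u:\ u\in\mathbb{R}^n\}.$$
   Context: A weighted digraph on $\{1,\ldots,N\}$ has weights $a_{ij}\ge0$, $a_{ii}=0$, with $a_{ij}>0$ iff $(j,i)$ is an edge (directed from $j$ to $i$); its Laplacian is $L=\mathrm{diag}\{\sum_ja_{1j},\ldots,\sum_ja_{Nj}\}-[a_{ij}]$. A digraph contains a directed spanning tree if some node has a directed path to every other node; the union of graphs on the same node set has the union of the edge sets. For a node $j$, $R(j)$ is the set consisting of $j$ and all nodes reachable from $j$ by a directed path. A reach is a maximal such set: $R=R(i)$ for some $i$ with no $j$ such that $R(i)\subsetneq R(j)$. For a digraph $\mathcal{G}$ with Laplacian $L$ and reaches $R_1,\ldots,R_\chi$, the exclusive part of $R_j$ is $H_j=R_j\setminus\bigcup_{l\ne j}R_l$ and its common part is $C_j=R_j\setminus H_j$. It is known that $\mathrm{Ker}(L)$ has a basis $\gamma_1,\ldots,\gamma_\chi\in\mathbb{R}^N$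 with $\gamma_j(s)=0$ for $s\notin R_j$, $\gamma_j(s)=1$ for $s\in H_j$, $\gamma_j(s)\in(0,1)$ for $s\in C_j$, and $\sum_j\gamma_j=\mathbf{1}_N$; these are the vectors $\gamma_j$ used. For each reach $R_j$, let $V_j\subset H_j$ be the set of nodes $i$ with $R(i)=R_j$ (a strongly connected set receiving no edges from outside); let $L_{jj}$ be the principal submatrix of $L$ indexed by $V_j$, and let $v_j\in\mathbb{R}^{|V_j|}$ satisfy $v_j^{\mathrm{T}}L_{jj}=0$ and $v_j^{\mathrm{T}}\mathbf{1}_{|V_j|}=1$. Then $\beta_j\in\mathbb{R}^N$ equals $v_j$ on the coordinates in $V_j$ and $0$ elsewhere (so $\beta_j^{\mathrm{T}}L=0$). Applying this construction to $\mathcal{G}_i$ gives $\chi_i$, $\gamma_{i,j}$, $\beta_{i,j}$. $\otimes$ is the Kronecker product. *)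

From mathcomp Require Import all_boot all_order all_algebra.
From mathcomp Require Export mxtens.
Set Implicit Arguments. Unset Strict Implicit. Unset Printing Implicit Defensive.
Import Order.TTheory GRing.Theory Num.Theory.
Local Open Scope ring_scope.

(* A weighted digraph on {1..N} (here 'I_N) is given by its weight matrix A,
   with A i j = a_ij >= 0, a_ii = 0, and a_ij > 0 iff (j,i) is an edge j -> i. *)

Section Graphs.
Variables (R : realFieldType) (N : nat).
Implicit Types (A : 'M[R]_N).

Definition wdigraph A := (forall i j, 0 <= A i j) /\ (forall i, A i i = 0).

Definition edge A : rel 'I_N := fun j i => 0 < A i j.

Definition laplacian A : 'M[R]_N :=
  \matrix_(i, j) ((i == j)%:R * (\sum_k A i k) - A i j).

Definition reachset A (j : 'I_N) : {set 'I_N} := [set i | connect (edge A) j i].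

Definition is_reach A (S : {set 'I_N}) : bool :=
  [exists i, (S == reachset A i) && [forall j, ~~ (reachset A i \proper reachset A j)]].

Definition reaches A : {set {set 'I_N}} := [set S | is_reach A S].

Definition excl_part A (S : {set 'I_N}) : {set 'I_N} :=
  S :\: \bigcup_(S' in reaches A | S' != S) S'.
Definition common_part A (S : {set 'I_N}) : {set 'I_N} := S :\: excl_part A S.

Definition root_part A (S : {set 'I_N}) : {set 'I_N} := [set i | reachset A i == S].

(* gam S = the kernel vector gamma attached to the reach S *)
Definition gamma_family A (gam : {set 'I_N} -> 'cV[R]_N) : Prop :=
  [/\ forall S, S \in reaches A -> laplacian A *m gam S = 0,
      forall S s, S \in reaches A -> s \notin S -> gam S s 0 = 0,
      forall S s, S \in reaches A -> s \in excl_part A S -> gam S s 0 = 1,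
      forall S s, S \in reaches A -> s \in common_part A S ->
                  0 < gam S s 0 < 1 &
      \sum_(S in reaches A) gam S = const_mx 1].

Definition beta_family A (bet : {set 'I_N} -> 'cV[R]_N) : Prop :=
  [/\ forall S s, S \in reaches A -> s \notin root_part A S -> bet S s 0 = 0,
      forall S t, S \in reaches A -> t \in root_part A S ->
        \sum_(s in root_part A S) bet S s 0 * laplacian A s t = 0 &
      forall S, S \in reaches A -> \sum_(s in root_part A S) bet S s 0 = 1].

Definition delta n A (gam bet : {set 'I_N} -> 'cV[R]_N) (x : 'cV[R]_(N * n)) :
  'cV[R]_(N * n) :=
  x - \sum_(S in reaches A) ((gam S *m (bet S)^T) *t (1%:M : 'M[R]_n)) *m x.

End Graphs.

Definition union_edge (R : realFieldType) (N p : nat) (A : 'I_p -> 'M[R]_N)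
  : rel 'I_N := fun j i => [exists k, 0 < A k i j].

Definition has_spanning_tree (N : nat) (e : rel 'I_N) : Prop :=
  exists r : 'I_N, forall i, connect e r i.

(* If [x = 1 (x) u], then [beta^T 1 = 1] and [sum gamma = 1] give
   [delta_i x = 0]. Conversely, [delta_i x = 0] writes [x] through the
   [gamma_{i,j}], which lie in [Ker L_i], so [(L_i (x) I_n) x = 0]: every
   coordinate slice [y] of [x] is annihilated by all the Laplacians. A maximum
   principle then forces [y] to be constant: at a node where [y] is maximal,
   the row of [L_i y = 0] is a sum of nonnegative terms [a_st (y_s - y_t)], so
   every in-neighbour is maximal too, and following a path of the union graph
   back to the root shows that [y] is maximal (and likewise minimal) there. *)
From mathcomp Require Import all_boot all_order all_algebra.
Set Implicit Arguments. Unset Strict Implicit. Unset Printing Implicit Defensive.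
Import Order.TTheory GRing.Theory Num.Theory.
Local Open Scope ring_scope.

Lemma tensmx_suml (R : comPzRingType) (I : finType) (P : pred I) m n p q
    (F : I -> 'M[R]_(m, n)) (B : 'M[R]_(p, q)) :
  \sum_(i | P i) (F i *t B) = (\sum_(i | P i) F i) *t B.
Proof.
apply/matrixP => a b; rewrite summxE !mxE summxE mulr_suml.
by apply: eq_bigr => i _; rewrite mxE.
Qed.

Definition mxtens_col (R : Type) m n (k : 'I_n) (x : 'cV[R]_(m * n)) : 'cV[R]_m :=
  \col_i x (mxtens_index (i, k)) 0.

Lemma sum_mxtens_index (R : nmodType) m n (F : 'I_(m * n) -> R) :
  \sum_j F j = \sum_i \sum_k F (mxtens_index (i, k)).
Proof.
rewrite pair_big /= (reindex (@mxtens_index m n)) /=; first by apply: eq_bigr => -[].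
by exists (@mxtens_unindex m n) => j _; [apply: mxtens_indexK | apply: mxtens_unindexK].
Qed.

Lemma mxtens_col_mul (R : comPzRingType) m N n (k : 'I_n)
    (M : 'M[R]_(m, N)) (x : 'cV[R]_(N * n)) :
  mxtens_col k ((M *t 1%:M) *m x) = M *m mxtens_col k x.
Proof.
apply/matrixP => s c; rewrite !mxE sum_mxtens_index; apply: eq_bigr => t _.
rewrite (bigD1 k) //= tensmxE mxE eqxx mulr1 big1 ?addr0 => [|l /negbTE kl].
  by rewrite mxE.
by rewrite tensmxE mxE eq_sym kl mulr0 mul0r.
Qed.

Lemma mxtens_const1_col (R : pzRingType) m n (x : 'cV[R]_(m * n)) r :
  (forall k s, mxtens_col k x s 0 = mxtens_col k x r 0) ->
  x = (const_mx 1 : 'cV[R]_m) *t \col_k x (mxtens_index (r, k)) 0.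
Proof.
move=> col_const; apply/matrixP => j c; case: (mxtens_indexP j) => s k.
by have := col_const k s; rewrite !mxE mxtens_indexK mul1r (ord1 c).
Qed.

Section MaximumPrinciple.
Variables (R : realFieldType) (N : nat).
Implicit Types (A : 'M[R]_N) (y : 'cV[R]_N).

Lemma laplacian_mulE A y s :
  (laplacian A *m y) s 0 = \sum_t A s t * (y s 0 - y t 0).
Proof.
rewrite mxE; under eq_bigr do rewrite mxE mulrBl.
under [RHS]eq_bigr do rewrite mulrBr.
rewrite !sumrB; congr (_ - _).
rewrite (bigD1 s) //= eqxx mul1r mulr_suml [X in _ + X]big1 ?addr0 // => t /negbTE.
by rewrite eq_sym => ->; rewrite !mul0r.
Qed.

Lemma laplacian_ker_max_edge A y j i :
  (forall s t, 0 <= A s t) -> laplacian A *m y = 0 ->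
  (forall t, y t 0 <= y i 0) -> edge A j i -> y j 0 = y i 0.
Proof.
move=> A_ge0 Ly0 ymax Aij.
have terms_ge0 t : true -> 0 <= A i t * (y i 0 - y t 0).
  by move=> _; rewrite mulr_ge0 // subr_ge0.
have row_eq0 : \sum_t A i t * (y i 0 - y t 0) = 0.
  by rewrite -laplacian_mulE Ly0 mxE.
have /eqP := psumr_eq0P terms_ge0 row_eq0 (i := j) isT.
rewrite mulf_eq0 subr_eq0 => /orP[/eqP Aij0 | /eqP //].
by move: Aij; rewrite /edge Aij0 ltxx.
Qed.

End MaximumPrinciple.

Section UnionGraph.
Variables (R : realFieldType) (N p : nat) (A : 'I_p -> 'M[R]_N).
Hypothesis A_ge0 : forall i s t, 0 <= A i s t.

Lemma common_ker_max_connect (y : 'cV[R]_N) m j :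
  (forall i, laplacian (A i) *m y = 0) -> (forall t, y t 0 <= y m 0) ->
  connect (union_edge A) j m -> y j 0 = y m 0.
Proof.
move=> Ly0 ymax /connectP[q]; elim: q j => [j _ -> //|z q IHq] j /=.
move=> /andP[/existsP[i Aijz] zq] /(IHq z zq) yz; rewrite -yz.
by apply: (laplacian_ker_max_edge (A_ge0 i) (Ly0 i) _ Aijz) => t; rewrite yz.
Qed.

Lemma common_ker_le_root (y : 'cV[R]_N) r :
  (forall i, laplacian (A i) *m y = 0) -> (forall t, connect (union_edge A) r t) ->
  forall s, y s 0 <= y r 0.
Proof.
move=> Ly0 root_conn s.
have [m _ ymax] := @arg_maxP _ _ _ r predT (fun t => y t 0) isT.
have {}ymax t : y t 0 <= y m 0 by apply: ymax.
by rewrite (common_ker_max_connect Ly0 ymax (root_conn m)).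
Qed.

Lemma common_ker_const (y : 'cV[R]_N) r :
  (forall i, laplacian (A i) *m y = 0) -> (forall t, connect (union_edge A) r t) ->
  forall s, y s 0 = y r 0.
Proof.
move=> Ly0 root_conn s; apply/eqP; rewrite eq_le common_ker_le_root //=.
have Lny0 i : laplacian (A i) *m - y = 0 by rewrite mulmxN Ly0 oppr0.
by have := common_ker_le_root Lny0 root_conn s; rewrite !mxE lerN2.
Qed.

End UnionGraph.

Section Delta.
Variables (R : realFieldType) (N n : nat) (A : 'M[R]_N).
Variables (gam bet : {set 'I_N} -> 'cV[R]_N).

Lemma delta_eq0_laplacian (x : 'cV[R]_(N * n)) :
  gamma_family A gam -> delta A gam bet x = 0 ->
  (laplacian A *t (1%:M : 'M[R]_n)) *m x = 0.
Proof.
move=> [Lgam0 _ _ _ _] /eqP; rewrite subr_eq0 => /eqP {1}->.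
rewrite mulmx_sumr big1 // => S reachS.
by rewrite mulmxA tensmx_mul mul1mx mulmxA Lgam0 // mul0mx tens0mx mul0mx.
Qed.

Lemma beta_tr_mul_const1 S :
  beta_family A bet -> S \in reaches A -> (bet S)^T *m const_mx 1 = 1%:M.
Proof.
move=> [bet0 _ bet_sum1] reachS; apply/matrixP => a b; rewrite !ord1 !mxE.
rewrite (bigID (mem (root_part A S))) /= [X in _ + X]big1 ?addr0.
  by rewrite -[RHS](bet_sum1 S reachS); apply: eq_bigr => s _; rewrite !mxE mulr1.
by move=> s /(bet0 _ _ reachS) bet_s0; rewrite !mxE bet_s0 mul0r.
Qed.

Lemma delta_const1_tens (u : 'cV[R]_n) :
  gamma_family A gam -> beta_family A bet ->
  delta A gam bet ((const_mx 1 : 'cV[R]_N) *t u) = 0.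
Proof.
move=> gamA betA; apply/eqP; rewrite subr_eq0; apply/eqP.
case: gamA => _ _ _ _ gam_sum1.
rewrite -[in LHS]gam_sum1 -tensmx_suml; apply: eq_bigr => S reachS.
have := tensmx_mul (gam S *m (bet S)^T) 1%:M (const_mx 1 : 'cV[R]_N) u.
by rewrite -mulmxA beta_tr_mul_const1 // mulmx1 mul1mx.
Qed.

End Delta.

Theorem lemma8 (R : realFieldType) (N p n : nat) (A : 'I_p -> 'M[R]_N)
  (gam bet : 'I_p -> {set 'I_N} -> 'cV[R]_N) :
  (forall i, wdigraph (A i)) ->
  has_spanning_tree (union_edge A) ->
  (1 <= n)%N ->
  (forall i, gamma_family (A i) (gam i)) ->
  (forall i, beta_family (A i) (bet i)) ->
  forall x : 'cV[R]_(N * n),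
    (forall i, delta (A i) (gam i) (bet i) x = 0) <->
    (exists u : 'cV[R]_n, x = (const_mx 1 : 'cV[R]_N) *t u).
Proof.
move=> wdA [r root_conn] _ gamA betA x.
split=> [delta0 | [u ->] i]; last exact: delta_const1_tens.
have A_ge0 i s t : 0 <= A i s t by case: (wdA i).
have Lcol0 k i : laplacian (A i) *m mxtens_col k x = 0.
  rewrite -mxtens_col_mul (delta_eq0_laplacian (gamA i) (delta0 i)).
  by apply/matrixP => s c; rewrite !mxE.
exists (\col_k x (mxtens_index (r, k)) 0); apply: mxtens_const1_col => k.
exact: common_ker_const A_ge0 _ _ (Lcol0 k) root_conn.
Qed.
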